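(* Let $I\subset\mathbb{Z}$ be an interval of integers (with $|I|$ its number of elements), and let $a,b,q\in\mathbb{Z}$, $q\ge 1$, satisfy $\gcd(a,q)=1$ and: $b\in\mathbb{Z}$ arbitrary when $q$ is odd; $b$ even when $q\equiv 0 \pmod 4$; $b$ odd when $q\equiv 2\pmod 4$. Let $f(r)=\frac{a}{q}r^2+\frac{b}{q}r$. Then $$\Big|\sum_{k\in I}e^{2\pi i f(k)}\Big| = C\frac{|I|}{\sqrt q}+\mathcal{O}\big(\sqrt{q\ln q}\big),$$ for some number $C$ with $\frac12\le C\le\sqrt2$, where the implied constant in $\mathcal{O}$ is absolute. *)

From Stdlib Require Import Reals ZArith List.
From Coquelicot Require Import Coquelicot.
Open Scope R_scope.

Definition e2pi (x : R) : C := (cos (2 * PI * x), sin (2 * PI * x)).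

(* Sum over the integer interval I = {m, m+1, ..., m+n-1} (|I| = n) of e(f(k)). *)
Definition expsum (f : Z -> R) (m : Z) (n : nat) : C :=
  fold_right Cplus (RtoC 0)
    (map (fun k : nat => e2pi (f (m + Z.of_nat k)%Z)) (seq 0 n)).

Definition quadf (a b q : Z) (r : Z) : R :=
  IZR a / IZR q * (IZR r) ^ 2 + IZR b / IZR q * IZR r.

(* Write [n = N q + L] with [L < q].  As [e(f)] has period [q], the sum is [N G + T] with [G] the
   complete Gauss sum and [T] a sum of [L < q] consecutive terms.  Expanding [|G|^2 = G conj(G)]
   gives, for each shift [k], a geometric progression of ratio [e(2ak/q)]: it vanishes unless
   [q | 2k], and the parity condition on [b] makes the (one or two) surviving shifts contribute
   exactly [q].  Hence [q <= |G|^2 <= 2q], and [C = |G| / sqrt q].  Weyl differencing writes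
   [|T|^2] as a sum over shifts [h] of geometric progressions of ratio [e(c h / d)], where
   [c / d = 2a / q] in lowest terms; each is at most [d/r + d/(d-r)] with [r = c h mod d], and
   as [h] runs through residues this sums to [O(q log q)].  Finally
   [| |S| - C n / sqrt q | <= |T| + |G| L / q = O(sqrt (q log q))]. *)

From Stdlib Require Import Reals ZArith List Lra Lia Psatz Permutation Znumtheory.
From Coquelicot Require Import Coquelicot.
Open Scope R_scope.

Lemma Cmod_sq_mul_conj z : Cmod z ^ 2 = Cmod (Cmult z (Cconj z)).
Proof. rewrite <- Cmod2_conj, Cmod_R, Rabs_right; [reflexivity | apply Rle_ge, pow2_ge_0]. Qed.

Lemma Rabs_Cmod_add_sub z w : Rabs (Cmod (Cplus z w) - Cmod z) <= Cmod w.
Proof.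
  apply Rabs_le. pose proof (Cmod_triangle z w).
  pose proof (Cmod_triangle (Cplus z w) (Copp w)). rewrite Cmod_opp in *.
  replace (Cplus (Cplus z w) (Copp w)) with z in * by ring. lra.
Qed.

Lemma le_mult_sqrt k x y : 0 <= k -> 0 <= y -> x ^ 2 <= k ^ 2 * y -> x <= k * sqrt y.
Proof.
  intros Hk Hy Hx.
  assert (0 <= k * sqrt y) by (apply Rmult_le_pos; [assumption | apply sqrt_pos]).
  assert ((k * sqrt y) ^ 2 = k ^ 2 * y)
    by (rewrite Rpow_mult_distr, pow2_sqrt; [ring | assumption]).
  apply Rnot_lt_le. intros Hlt. nra.
Qed.

Lemma div_sqrt_bounds x y : 0 < y -> 0 <= x -> y <= x ^ 2 <= 2 * y -> 1 <= x / sqrt y <= sqrt 2.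
Proof.
  intros Hy Hx Hxy. pose proof (sqrt_lt_R0 y Hy).
  assert (Hsq : (x / sqrt y) ^ 2 = x ^ 2 / y)
    by (rewrite <- (pow2_sqrt y) at 2 by lra; field; lra).
  assert (1 <= (x / sqrt y) ^ 2 <= 2).
  { rewrite Hsq. split; [rewrite <- Rle_div_r | rewrite Rle_div_l]; lra. }
  assert (0 <= x / sqrt y) by (apply Rdiv_le_0_compat; lra).
  split; [nra|]. rewrite <- (sqrt_pow2 (x / sqrt y)) by assumption. apply sqrt_le_1_alt. lra.
Qed.

Fixpoint csum (g : nat -> C) (n : nat) : C :=
  match n with O => RtoC 0 | S n => Cplus (csum g n) (g n) end.

Fixpoint rsum (g : nat -> R) (n : nat) : R :=
  match n with O => 0 | S n => rsum g n + g n end.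

Lemma expsum_csum f m n : expsum f m n = csum (fun k => e2pi (f (m + Z.of_nat k)%Z)) n.
Proof.
  unfold expsum. induction n as [|n IH]; [reflexivity|].
  rewrite seq_S, map_app, fold_right_app. cbn [csum]. rewrite <- IH. clear IH. simpl.
  induction (map _ (seq 0 n)) as [|x l IHl]; simpl; [ring | rewrite IHl; ring].
Qed.

Lemma csum_ext g1 g2 n : (forall k, (k < n)%nat -> g1 k = g2 k) -> csum g1 n = csum g2 n.
Proof. induction n; intros H; simpl; [|rewrite IHn, H]; auto with arith. Qed.

Lemma rsum_ext g1 g2 n : (forall k, (k < n)%nat -> g1 k = g2 k) -> rsum g1 n = rsum g2 n.
Proof. induction n; intros H; simpl; [|rewrite IHn, H]; auto with arith. Qed.

Lemma rsum_le g1 g2 n : (forall k, (k < n)%nat -> g1 k <= g2 k) -> rsum g1 n <= rsum g2 n.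
Proof.
  induction n; intros H; simpl; [lra|].
  pose proof (H n ltac:(lia)). pose proof (IHn ltac:(auto with arith)). lra.
Qed.

Lemma rsum_const c n : rsum (fun _ => c) n = INR n * c.
Proof. induction n; simpl rsum; [simpl; ring | rewrite IHn, S_INR; ring]. Qed.

Lemma rsum_nonneg g n : (forall k, (k < n)%nat -> 0 <= g k) -> 0 <= rsum g n.
Proof. intros H. rewrite <- (Rmult_0_r (INR n)), <- rsum_const. now apply rsum_le. Qed.

Lemma csum_split g n1 n2 :
  csum g (n1 + n2) = Cplus (csum g n1) (csum (fun k => g (n1 + k)%nat) n2).
Proof.
  induction n2; simpl; [rewrite Nat.add_0_r; ring|].
  rewrite Nat.add_succ_r. simpl. rewrite IHn2. ring.
Qed.

Lemma rsum_split g n1 n2 : rsum g (n1 + n2) = rsum g n1 + rsum (fun k => g (n1 + k)%nat) n2.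
Proof.
  induction n2; simpl; [rewrite Nat.add_0_r; ring|].
  rewrite Nat.add_succ_r. simpl. rewrite IHn2. ring.
Qed.

Lemma rsum_plus g1 g2 n : rsum (fun k => g1 k + g2 k) n = rsum g1 n + rsum g2 n.
Proof. induction n; simpl; [ring | rewrite IHn; ring]. Qed.

Lemma rsum_mult_l c g n : rsum (fun k => c * g k) n = c * rsum g n.
Proof. induction n; simpl; [ring | rewrite IHn; ring]. Qed.

Lemma rsum_rev g n : rsum g n = rsum (fun i => g (n - 1 - i)%nat) n.
Proof.
  induction n; [reflexivity|].
  replace (S n) with (1 + n)%nat at 2 by lia. rewrite rsum_split. simpl. rewrite IHn.
  rewrite Nat.sub_0_r, Nat.sub_0_r.
  rewrite (rsum_ext (fun k => g (n - S k)%nat) (fun i => g (n - 1 - i)%nat))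
    by (intros; f_equal; lia).
  ring.
Qed.

Lemma rsum_delta k0 n :
  rsum (fun k => if Nat.eqb k k0 then 1 else 0) n = if Nat.ltb k0 n then 1 else 0.
Proof.
  induction n; simpl; [reflexivity|]. rewrite IHn.
  destruct (Nat.eqb_spec n k0), (Nat.ltb_spec k0 n), (Nat.ltb_spec k0 (S n));
    try lia; subst; ring.
Qed.

Lemma csum_delta (g : nat -> C) k0 n :
  csum (fun k => if Nat.eqb k k0 then g k else RtoC 0) n = if Nat.ltb k0 n then g k0 else RtoC 0.
Proof.
  induction n; simpl; [reflexivity|]. rewrite IHn.
  destruct (Nat.eqb_spec n k0), (Nat.ltb_spec k0 n), (Nat.ltb_spec k0 (S n));
    try lia; subst; ring.
Qed.

Lemma csum_plus g1 g2 n : csum (fun k => Cplus (g1 k) (g2 k)) n = Cplus (csum g1 n) (csum g2 n).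
Proof. induction n; simpl; [ring | rewrite IHn; ring]. Qed.

Lemma csum_mult_l c g n : Cmult c (csum g n) = csum (fun k => Cmult c (g k)) n.
Proof. induction n; simpl; [ring | rewrite <- IHn; ring]. Qed.

Lemma csum_mult_r c g n : Cmult (csum g n) c = csum (fun k => Cmult (g k) c) n.
Proof. induction n; simpl; [ring | rewrite <- IHn; ring]. Qed.

Lemma csum_conj g n : Cconj (csum g n) = csum (fun k => Cconj (g k)) n.
Proof.
  induction n; simpl; [unfold Cconj, RtoC; simpl; f_equal; ring|].
  now rewrite Cplus_conj, IHn.
Qed.

Lemma csum_const c n : csum (fun _ => c) n = Cmult (RtoC (INR n)) c.
Proof. induction n; simpl csum; [simpl; ring | rewrite IHn, S_INR, RtoC_plus; ring]. Qed.

Lemma csum_RtoC g n : csum (fun k => RtoC (g k)) n = RtoC (rsum g n).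
Proof. induction n; simpl; [reflexivity | now rewrite IHn, RtoC_plus]. Qed.

Lemma csum_swap (g : nat -> nat -> C) n1 n2 :
  csum (fun i => csum (g i) n2) n1 = csum (fun j => csum (fun i => g i j) n1) n2.
Proof.
  induction n1; simpl.
  - rewrite (csum_const (RtoC 0)). ring.
  - now rewrite IHn1, <- csum_plus.
Qed.

Lemma Cmod_csum_le g n : Cmod (csum g n) <= rsum (fun k => Cmod (g k)) n.
Proof.
  induction n; simpl; [rewrite Cmod_0; lra|].
  eapply Rle_trans; [apply Cmod_triangle | lra].
Qed.

Lemma csum_indicator_interval (g : nat -> C) A B L :
  csum (fun l => if andb (Nat.leb A l) (Nat.ltb l B) then g l else RtoC 0) L
  = csum (fun i => g (A + i)%nat) (Nat.min B L - A).
Proof.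
  induction L; simpl; [replace (Nat.min B 0 - A)%nat with 0%nat by lia; reflexivity|].
  rewrite IHL. destruct (Nat.leb_spec A L), (Nat.ltb_spec L B); simpl.
  1: replace (Nat.min B (S L) - A)%nat with (S (Nat.min B L - A)) by lia;
     simpl; do 2 f_equal; lia.
  all: replace (Nat.min B (S L) - A)%nat with (Nat.min B L - A)%nat by lia; ring.
Qed.

Lemma rsum_map_seq g n : rsum g n = fold_right Rplus 0 (map g (seq 0 n)).
Proof.
  induction n as [|n IH]; [reflexivity|].
  rewrite seq_S, map_app, fold_right_app. simpl. rewrite IH. clear IH.
  induction (map g (seq 0 n)) as [|x l IHl]; simpl; lra.
Qed.

Lemma rsum_perm g (s : nat -> nat) n : Permutation (map s (seq 0 n)) (seq 0 n) ->
  rsum (fun i => g (s i)) n = rsum g n.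
Proof.
  intros Hs. rewrite !rsum_map_seq, <- (map_map s g).
  apply (Permutation_map g) in Hs.
  induction Hs; simpl; [reflexivity | now rewrite IHHs | ring | congruence].
Qed.

Lemma csum_shift1 g p : csum (fun k => g (S k)) p = Cplus (csum g p) (Cminus (g p) (g O)).
Proof. induction p; simpl; [ring | rewrite IHp; ring]. Qed.

Lemma csum_periodic_shift g p s : (forall k, g (k + p)%nat = g k) ->
  csum (fun k => g (s + k)%nat) p = csum g p.
Proof.
  intros Hg. induction s as [|s IH]; [reflexivity|].
  rewrite <- IH, (csum_ext _ (fun k => g (s + S k)%nat)) by (intros; f_equal; lia).
  rewrite (csum_shift1 (fun k => g (s + k)%nat)), Nat.add_0_r, Hg. ring.
Qed.

Lemma csum_periodic_blocks g p N : (forall k, g (k + p)%nat = g k) ->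
  csum g (N * p) = Cmult (RtoC (INR N)) (csum g p).
Proof.
  intros Hg. induction N as [|N IH]; [simpl; ring|].
  simpl Nat.mul. rewrite csum_split, (csum_ext (fun k => g (p + k)%nat) g), IH, S_INR, RtoC_plus.
  - ring.
  - intros k _. rewrite Nat.add_comm. apply Hg.
Qed.

Lemma csum_diagonal_delta (W : nat -> C) L j l : (j < 2 * L)%nat -> (l < L)%nat ->
  csum (fun k => if Nat.eqb j (k + L - l) then W k else RtoC 0) L
  = if andb (Nat.leb (L - j) l) (Nat.ltb l (2 * L - j)) then W (l + j - L)%nat else RtoC 0.
Proof.
  intros Hj Hl. destruct (Nat.leb_spec L (l + j)).
  - rewrite (csum_ext _ (fun k => if Nat.eqb k (l + j - L) then W k else RtoC 0)), csum_delta.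
    + destruct (Nat.ltb_spec (l + j - L) L), (Nat.leb_spec (L - j) l), (Nat.ltb_spec l (2 * L - j));
        simpl; reflexivity || lia.
    + intros k _. destruct (Nat.eqb_spec j (k + L - l)), (Nat.eqb_spec k (l + j - L));
        reflexivity || lia.
  - rewrite (csum_ext _ (fun _ => RtoC 0)), csum_const, Cmult_0_r.
    + destruct (Nat.leb_spec (L - j) l); simpl; reflexivity || lia.
    + intros k _. destruct (Nat.eqb_spec j (k + L - l)); reflexivity || lia.
Qed.

(* The [j]-th inner sum collects the products [y k * conj (y l)] with [k - l = j - L]. *)
Lemma csum_mul_conj_diagonals (y : nat -> C) L :
  Cmult (csum y L) (Cconj (csum y L)) =
  csum (fun j => csum (fun l => if andb (Nat.leb (L - j) l) (Nat.ltb l (2 * L - j))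
                                then Cmult (y (l + j - L)%nat) (Cconj (y l)) else RtoC 0) L)
       (2 * L).
Proof.
  rewrite csum_conj, csum_mult_l.
  rewrite (csum_ext _ (fun l => csum (fun k => csum (fun j =>
             if Nat.eqb j (k + L - l) then Cmult (y k) (Cconj (y l)) else RtoC 0) (2 * L)) L)).
  2: { intros l Hl. rewrite csum_mult_r. apply csum_ext. intros k Hk.
       rewrite csum_delta. destruct (Nat.ltb_spec (k + L - l) (2 * L)); reflexivity || lia. }
  rewrite (csum_ext _ (fun l => csum (fun j => csum (fun k =>
             if Nat.eqb j (k + L - l) then Cmult (y k) (Cconj (y l)) else RtoC 0) L) (2 * L)))
    by (intros; apply csum_swap).
  rewrite csum_swap. apply csum_ext. intros j Hj. apply csum_ext. intros l Hl.
  apply (csum_diagonal_delta (fun k => Cmult (y k) (Cconj (y l)))); assumption.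
Qed.

Lemma e2pi_add x y : e2pi (x + y) = Cmult (e2pi x) (e2pi y).
Proof.
  unfold e2pi, Cmult; simpl. rewrite Rmult_plus_distr_l, cos_plus, sin_plus. f_equal; ring.
Qed.

Lemma e2pi_opp x : e2pi (- x) = Cconj (e2pi x).
Proof.
  unfold e2pi, Cconj; simpl.
  replace (2 * PI * - x) with (- (2 * PI * x)) by ring. now rewrite cos_neg, sin_neg.
Qed.

Lemma e2pi_sub x y : e2pi (x - y) = Cmult (e2pi x) (Cconj (e2pi y)).
Proof. now rewrite <- e2pi_opp, <- e2pi_add. Qed.

Lemma e2pi_INR n : e2pi (INR n) = RtoC 1.
Proof.
  unfold e2pi, RtoC. replace (2 * PI * INR n) with (0 + 2 * INR n * PI) by ring.
  now rewrite cos_period, sin_period, cos_0, sin_0.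
Qed.

Lemma e2pi_IZR z : e2pi (IZR z) = RtoC 1.
Proof.
  destruct (Z.le_ge_cases 0 z).
  - rewrite <- (Z2Nat.id z), <- INR_IZR_INZ by lia. apply e2pi_INR.
  - replace z with (- Z.of_nat (Z.to_nat (- z)))%Z by lia.
    rewrite opp_IZR, <- INR_IZR_INZ, e2pi_opp, e2pi_INR.
    unfold Cconj, RtoC; simpl. f_equal; ring.
Qed.

Lemma e2pi_add_IZR x z : e2pi (x + IZR z) = e2pi x.
Proof. rewrite e2pi_add, e2pi_IZR. ring. Qed.

Lemma Cmod_e2pi x : Cmod (e2pi x) = 1.
Proof.
  unfold Cmod, e2pi; cbn [fst snd].
  pose proof (sin2_cos2 (2 * PI * x)) as H. unfold Rsqr in H.
  rewrite <- sqrt_1. f_equal. lra.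
Qed.

Lemma Cmod_e2pi_sub1_sq x : Cmod (Cminus (e2pi x) (RtoC 1)) ^ 2 = 4 * sin (PI * x) ^ 2.
Proof.
  unfold Cmod, e2pi, Cminus, Cplus, Copp, RtoC; cbn [fst snd].
  rewrite pow2_sqrt by (apply Rplus_le_le_0_compat; apply pow2_ge_0).
  replace (2 * PI * x) with (2 * (PI * x)) by ring. rewrite cos_2a_sin, sin_2a.
  pose proof (sin2_cos2 (PI * x)) as H. unfold Rsqr in H. nra.
Qed.

(* Jordan's inequality, from the degree-7 Taylor lower bound [SIN] for the sine. *)
Lemma sin_PI_mult_ge x : 0 <= x <= 1/2 -> x <= sin (PI * x).
Proof.
  intros Hx. pose proof PI2_3_2. pose proof PI_4.
  set (t := PI * x). assert (0 <= t <= 2) by (unfold t; nra).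
  destruct (SIN t) as [Hs _]; try lra.
  assert (E : sin_lb t = t - t^3/6 + t^5/120 - t^7/5040)
    by (unfold sin_lb, sin_approx, sin_term; simpl; field).
  assert (0 <= t^5) by (apply pow_le; lra).
  assert (t^5 * (t * t) <= t^5 * 4) by (apply Rmult_le_compat_l; nra).
  assert (t / 3 >= x) by (unfold t; nra).
  nra.
Qed.

Lemma Cmod_e2pi_sub1_ge x : 0 <= x <= 1 -> 2 * x * (1 - x) <= Cmod (Cminus (e2pi x) (RtoC 1)).
Proof.
  intros Hx.
  assert (Hsin : x * (1 - x) <= sin (PI * x)).
  { destruct (Rle_lt_dec x (1/2)).
    - pose proof (sin_PI_mult_ge x ltac:(lra)). nra.
    - rewrite <- sin_PI_x. replace (PI - PI * x) with (PI * (1 - x)) by ring.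
      pose proof (sin_PI_mult_ge (1 - x) ltac:(lra)). nra. }
  pose proof (Cmod_e2pi_sub1_sq x). pose proof (Cmod_ge_0 (Cminus (e2pi x) (RtoC 1))).
  nra.
Qed.

Lemma e2pi_IZR_div_mod z d : (0 < d)%Z -> e2pi (IZR z / IZR d) = e2pi (IZR (z mod d) / IZR d).
Proof.
  intros Hd. rewrite (Z_div_mod_eq_full z d) at 1. rewrite plus_IZR, mult_IZR.
  replace ((IZR d * IZR (z / d) + IZR (z mod d)) / IZR d)
    with (IZR (z mod d) / IZR d + IZR (z / d)) by (field; apply not_0_IZR; lia).
  apply e2pi_add_IZR.
Qed.

Lemma Cmod_e2pi_frac_sub1_ge z d : (0 < d)%Z -> (z mod d <> 0)%Z ->
  let x := IZR (z mod d) / IZR d in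
  0 < x < 1 /\ 2 * x * (1 - x) <= Cmod (Cminus (e2pi (IZR z / IZR d)) (RtoC 1)).
Proof.
  intros Hd Hz x. pose proof (Z.mod_pos_bound z d Hd).
  assert (0 < x < 1).
  { unfold x. assert (0 < IZR (z mod d) < IZR d) by (split; apply IZR_lt; lia).
    split; [apply Rdiv_lt_0_compat | apply (Rdiv_lt_1 (IZR (z mod d)))]; lra. }
  split; [assumption|]. rewrite e2pi_IZR_div_mod by assumption.
  apply Cmod_e2pi_sub1_ge. fold x. lra.
Qed.

Lemma e2pi_IZR_div_neq1 z d : (0 < d)%Z -> (z mod d <> 0)%Z -> e2pi (IZR z / IZR d) <> RtoC 1.
Proof.
  intros Hd Hz E. destruct (Cmod_e2pi_frac_sub1_ge z d Hd Hz) as [Hx Hlb].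
  rewrite E in Hlb. replace (Cminus (RtoC 1) (RtoC 1)) with (RtoC 0) in Hlb by ring.
  rewrite Cmod_0 in Hlb. nra.
Qed.

(** * Geometric sums *)

Lemma csum_geom_telescope a b n :
  Cmult (Cminus (e2pi a) (RtoC 1)) (csum (fun i => e2pi (a * INR i + b)) n)
  = Cminus (e2pi (a * INR n + b)) (e2pi b).
Proof.
  induction n; simpl csum.
  - simpl INR. rewrite Rmult_0_r, Rplus_0_l. ring.
  - rewrite Cmult_plus_distr_l, IHn, S_INR.
    replace (a * (INR n + 1) + b) with (a + (a * INR n + b)) by ring.
    rewrite (e2pi_add a). ring.
Qed.

Lemma Cmod_csum_geom_le a b n : 0 < Cmod (Cminus (e2pi a) (RtoC 1)) ->
  Cmod (csum (fun i => e2pi (a * INR i + b)) n) <= 2 / Cmod (Cminus (e2pi a) (RtoC 1)).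
Proof.
  intros H. apply Rmult_le_reg_l with (1 := H). unfold Rdiv.
  rewrite <- Rmult_assoc, (Rmult_comm _ 2), Rmult_assoc, Rinv_r, Rmult_1_r by lra.
  rewrite <- Cmod_mult, csum_geom_telescope.
  eapply Rle_trans; [apply Cmod_triangle|]. rewrite Cmod_opp, !Cmod_e2pi. lra.
Qed.

Lemma csum_geom_eq0 a b n : e2pi a <> RtoC 1 -> (exists z, a * INR n = IZR z) ->
  csum (fun i => e2pi (a * INR i + b)) n = RtoC 0.
Proof.
  intros Ha [z Hz].
  assert (Hu : Cminus (e2pi a) (RtoC 1) <> RtoC 0)
    by (intros E; apply Ha; rewrite <- (Cplus_0_l (RtoC 1)), <- E; ring).
  rewrite <- (Cmult_1_l (csum _ n)), <- (Cinv_l _ Hu), <- Cmult_assoc, csum_geom_telescope.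
  rewrite Hz, Rplus_comm, e2pi_add_IZR. ring.
Qed.

Lemma Cmod_csum_geom_frac_le z d b n : (0 < d)%Z -> (z mod d <> 0)%Z ->
  Cmod (csum (fun i => e2pi (IZR z / IZR d * INR i + b)) n)
  <= IZR d / IZR (z mod d) + IZR d / (IZR d - IZR (z mod d)).
Proof.
  intros Hd Hz. destruct (Cmod_e2pi_frac_sub1_ge z d Hd Hz) as [Hx Hlb].
  set (x := IZR (z mod d) / IZR d) in *.
  eapply Rle_trans; [apply Cmod_csum_geom_le; nra|].
  apply Rle_trans with (2 / (2 * x * (1 - x))).
  { apply Rmult_le_compat_l; [lra|]. apply Rinv_le_contravar; [nra | exact Hlb]. }
  pose proof (Z.mod_pos_bound z d Hd).
  assert (0 < IZR (z mod d) < IZR d) by (split; apply IZR_lt; lia).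
  unfold x. right. field. lra.
Qed.

(** * Harmonic sums and residue weights *)

Definition harmonic (n : nat) : R := rsum (fun i => 1 / (1 + INR i)) n.

Lemma harmonic_le n : (1 <= n)%nat -> harmonic n <= 1 + ln (INR n).
Proof.
  intros Hn. destruct n as [|n]; [lia|]. clear Hn.
  induction n as [|n IH].
  - unfold harmonic. simpl. rewrite ln_1. lra.
  - unfold harmonic in *. cbn [rsum] in *. set (x := INR (S n)) in *.
    assert (Hx : 1 <= x) by (unfold x; rewrite S_INR; pose proof (pos_INR n); lra).
    replace (INR (S (S n))) with (x + 1) by (unfold x; rewrite (S_INR (S n)); ring).
    (* [ln (x / (x + 1)) <= x / (x + 1) - 1], from [1 + t <= exp t] *)
    pose proof (exp_ineq1_le (ln (x / (x + 1)))) as Hexp.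
    rewrite exp_ln, ln_div in Hexp by (try apply Rdiv_lt_0_compat; lra).
    assert (x / (x + 1) = 1 - 1 / (x + 1)) by (field; lra).
    replace (1 + x) with (x + 1) by ring. lra.
Qed.

Definition resid (c : Z) (d : nat) (h : Z) : nat := Z.to_nat ((c * h) mod Z.of_nat d).

Lemma resid_lt c d h : (1 <= d)%nat -> (resid c d h < d)%nat.
Proof. intros Hd. unfold resid. pose proof (Z.mod_pos_bound (c * h) (Z.of_nat d)). lia. Qed.

Lemma resid_block_perm c d s : (1 <= d)%nat -> Z.gcd (Z.of_nat d) c = 1%Z ->
  Permutation (map (fun i => resid c d (s + Z.of_nat i)) (seq 0 d)) (seq 0 d).
Proof.
  intros Hd Hg. apply Permutation_map_same_l.
  - apply FinFun.Injective_map_NoDup_in; [|apply seq_NoDup].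
    intros x y Hx Hy E. apply in_seq in Hx, Hy. unfold resid in E.
    pose proof (Z.mod_pos_bound (c * (s + Z.of_nat x)) (Z.of_nat d) ltac:(lia)).
    pose proof (Z.mod_pos_bound (c * (s + Z.of_nat y)) (Z.of_nat d) ltac:(lia)).
    apply Z2Nat.inj, Z.cong_iff_0, Z.mod_divide in E; try lia.
    replace (c * (s + Z.of_nat x) - c * (s + Z.of_nat y))%Z
      with (c * (Z.of_nat x - Z.of_nat y))%Z in E by ring.
    apply Z.gauss in E; [|assumption]. destruct E as [k Hk].
    assert (k = 0)%Z by nia. lia.
  - intros x Hx. apply in_map_iff in Hx. destruct Hx as [i [<- _]].
    apply in_seq. pose proof (resid_lt c d (s + Z.of_nat i) Hd). lia.
Qed.

Lemma rsum_resid_blocks g c d s N : (1 <= d)%nat -> Z.gcd (Z.of_nat d) c = 1%Z ->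
  rsum (fun i => g (resid c d (s + Z.of_nat i))) (N * d) = INR N * rsum g d.
Proof.
  intros Hd Hg. revert s. induction N as [|N IH]; intros s; [simpl; ring|].
  simpl Nat.mul. rewrite rsum_split, S_INR.
  rewrite (rsum_perm g (fun i => resid c d (s + Z.of_nat i)))
    by (apply resid_block_perm; assumption).
  rewrite (rsum_ext (fun k => g (resid c d (s + Z.of_nat (d + k))))
                    (fun i => g (resid c d ((s + Z.of_nat d) + Z.of_nat i))))
    by (intros; now rewrite Nat2Z.inj_add, Z.add_assoc).
  rewrite IH. ring.
Qed.

(* The bound for a geometric sum of length at most [q] whose ratio is [e(r/d)]; for [r = 0] it is
   the trivial bound. *)
Definition geom_weight (q d r : nat) : R :=
  if Nat.eqb r 0 then INR q else INR d / INR r + INR d / (INR d - INR r).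

Lemma geom_weight_nonneg q d r : (r < d)%nat -> 0 <= geom_weight q d r.
Proof.
  intros Hr. unfold geom_weight. destruct (Nat.eqb_spec r 0); [apply pos_INR|].
  assert (0 < INR r < INR d) by (split; [apply lt_0_INR | apply lt_INR]; lia).
  assert (0 < INR d / INR r) by (apply Rdiv_lt_0_compat; lra).
  assert (0 < INR d / (INR d - INR r)) by (apply Rdiv_lt_0_compat; lra).
  lra.
Qed.

Lemma rsum_geom_weight_harmonic q d : (1 <= d)%nat ->
  rsum (geom_weight q d) d = INR q + 2 * INR d * harmonic (d - 1).
Proof.
  intros Hd. set (n := (d - 1)%nat).
  assert (Hn : INR n + 1 = INR d) by (unfold n; rewrite <- S_INR; f_equal; lia).
  replace d with (1 + n)%nat at 2 by lia. rewrite rsum_split. simpl rsum.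
  unfold geom_weight at 1. simpl Nat.eqb.
  rewrite (rsum_ext _ (fun i => INR d * (1 / (1 + INR i)) + INR d * (1 / (INR d - (1 + INR i))))).
  2: { intros i Hi. unfold geom_weight. simpl Nat.eqb. rewrite S_INR.
       assert (INR i + 1 < INR d) by (rewrite <- Hn; apply Rplus_lt_compat_r, lt_INR; lia).
       pose proof (pos_INR i). field. lra. }
  rewrite rsum_plus, !rsum_mult_l, (rsum_rev (fun i => 1 / (INR d - (1 + INR i)))).
  rewrite (rsum_ext (fun i => 1 / (INR d - (1 + INR (n - 1 - i)))) (fun i => 1 / (1 + INR i))).
  2: { intros i Hi. rewrite <- Hn. replace n with (n - 1 - i + i + 1)%nat at 1 by lia.
       rewrite !plus_INR. simpl INR. f_equal. ring. }
  fold (harmonic n). ring.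
Qed.

Lemma rsum_geom_weight_le q d : (1 <= d)%nat -> (d <= q)%nat ->
  rsum (geom_weight q d) d <= INR q + 2 * INR d * (1 + ln (INR q)).
Proof.
  intros Hd Hdq. rewrite rsum_geom_weight_harmonic by assumption.
  assert (Hln : 0 <= ln (INR q)) by (rewrite <- ln_1; apply ln_le; [lra | apply (le_INR 1); lia]).
  assert (Hharm : harmonic (d - 1) <= 1 + ln (INR q)).
  { destruct (Nat.eq_dec d 1) as [->|Hd1]; [unfold harmonic; simpl; lra|].
    eapply Rle_trans; [apply harmonic_le; lia|].
    apply Rplus_le_compat_l, ln_le; [apply lt_0_INR | apply le_INR]; lia. }
  assert (0 <= INR d) by apply pos_INR. nra.
Qed.

Lemma rsum_geom_weight_diagonals q d c L : (1 <= d)%nat -> Z.gcd (Z.of_nat d) c = 1%Z ->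
  (L <= 2 * d)%nat ->
  rsum (fun j => geom_weight q d (resid c d (Z.of_nat j - Z.of_nat L))) (2 * L)
  <= 4 * rsum (geom_weight q d) d.
Proof.
  intros Hd Hg HL.
  set (psi := fun j : nat => geom_weight q d (resid c d (- Z.of_nat L + Z.of_nat j))).
  rewrite (rsum_ext _ psi) by (intros; unfold psi; now rewrite Z.add_comm).
  replace 4 with (INR 4) by (simpl; ring).
  rewrite <- (rsum_resid_blocks _ c d (- Z.of_nat L) 4) by assumption.
  replace (4 * d)%nat with (2 * L + (4 * d - 2 * L))%nat by lia. rewrite rsum_split.
  rewrite <- (Rplus_0_r (rsum psi (2 * L))) at 1.
  apply Rplus_le_compat_l, rsum_nonneg. intros. apply geom_weight_nonneg, resid_lt, Hd.
Qed.

(** * The quadratic phase *)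

Lemma quadf_add_sub a b q r h : IZR q <> 0 ->
  quadf a b q (r + h) - quadf a b q r
  = 2 * IZR a * IZR h / IZR q * IZR r + (IZR a * IZR h ^ 2 + IZR b * IZR h) / IZR q.
Proof. intros Hq. unfold quadf. rewrite plus_IZR. field. exact Hq. Qed.

Lemma e2pi_quadf_add_period a b q r t : IZR q <> 0 ->
  e2pi (quadf a b q (r + t * q)) = e2pi (quadf a b q r).
Proof.
  intros Hq. rewrite <- (e2pi_add_IZR (quadf a b q r) (2 * a * r * t + a * t * t * q + b * t)).
  f_equal. unfold quadf. rewrite !plus_IZR, !mult_IZR. field. exact Hq.
Qed.

Definition gauss_parity (b q : Z) : Prop :=
  Z.odd q = true \/ (Z.modulo q 4 = 0%Z /\ Z.even b = true)
  \/ (Z.modulo q 4 = 2%Z /\ Z.odd b = true).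

(* The parity condition is exactly what makes [q/2] a period of [e(f)] when [q] is even. *)
Lemma half_period_integral a b q k :
  (1 <= q)%Z -> Z.gcd a q = 1%Z -> gauss_parity b q -> (0 <= k < q)%Z -> (q | 2 * k)%Z ->
  exists c w, (2 * k = c * q /\ a * k * k + b * k = w * q)%Z.
Proof.
  intros Hq Hg Hpar Hk [c Hc].
  assert (c = 0 \/ c = 1)%Z as [-> | ->] by nia.
  { exists 0%Z, 0%Z. assert (k = 0)%Z by lia. subst. lia. }
  exists 1%Z. destruct Hpar as [Hodd | [[H4 Hb] | [H4 Hb]]].
  - apply Z.odd_spec in Hodd. destruct Hodd. lia.
  - apply Z.even_spec in Hb. destruct Hb as [u Hu].
    assert (exists v, k = 2 * v)%Z as [v Hv]
      by (exists (k / 2)%Z; Z.to_euclidean_division_equations; lia).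
    exists (a * v + u)%Z. subst. split; ring_simplify; lia.
  - apply Z.odd_spec in Hb. destruct Hb as [u Hu].
    assert (exists v, k = 2 * v + 1)%Z as [v Hv]
      by (exists (k / 2)%Z; Z.to_euclidean_division_equations; lia).
    destruct (Z.Even_or_Odd a) as [[t Ht] | [t Ht]].
    + exfalso. assert (H2 : (2 | Z.gcd a q)%Z)
        by (apply Z.gcd_greatest; [exists t | exists k]; lia).
      rewrite Hg in H2. destruct H2 as [x Hx]. lia.
    + exists (2 * t * v + t + v + u + 1)%Z. subst. split; ring_simplify; lia.
Qed.

Section QuadraticPhase.

Variables (a b : Z) (q : nat).
Hypothesis q_pos : (1 <= q)%nat.

Let IZR_q_gt0 : 0 < IZR (Z.of_nat q).
Proof. apply IZR_lt. lia. Qed.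

Let IZR_q_neq0 : IZR (Z.of_nat q) <> 0.
Proof. lra. Qed.

Definition quad_term (m : Z) (k : nat) : C := e2pi (quadf a b (Z.of_nat q) (m + Z.of_nat k)).

Definition diff_slope (h : Z) : R := 2 * IZR a * IZR h / IZR (Z.of_nat q).

Definition diff_offset (m h : Z) : R :=
  diff_slope h * IZR m + (IZR a * IZR h ^ 2 + IZR b * IZR h) / IZR (Z.of_nat q).

Lemma quad_term_periodic m k : quad_term m (k + q) = quad_term m k.
Proof.
  unfold quad_term. rewrite <- (e2pi_quadf_add_period a b _ (m + Z.of_nat k) 1) by exact IZR_q_neq0.
  f_equal. f_equal. lia.
Qed.

Lemma quad_term_shift m n k : quad_term m (n + k) = quad_term (m + Z.of_nat n) k.
Proof. unfold quad_term. do 2 f_equal. lia. Qed.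

Lemma quad_term_mul_conj m k l h : Z.of_nat k = (Z.of_nat l + h)%Z ->
  Cmult (quad_term m k) (Cconj (quad_term m l)) = e2pi (diff_slope h * INR l + diff_offset m h).
Proof.
  intros Hk. unfold quad_term. rewrite <- e2pi_sub. f_equal.
  replace (m + Z.of_nat k)%Z with ((m + Z.of_nat l) + h)%Z by lia.
  rewrite quadf_add_sub by exact IZR_q_neq0.
  unfold diff_offset, diff_slope. rewrite plus_IZR, <- (INR_IZR_INZ l). ring.
Qed.

Lemma csum_quad_term_div_mod m N L :
  csum (quad_term m) (N * q + L) =
  Cplus (Cmult (RtoC (INR N)) (csum (quad_term m) q))
        (csum (quad_term (m + Z.of_nat (N * q))) L).
Proof.
  rewrite csum_split, csum_periodic_blocks by apply quad_term_periodic.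
  f_equal. apply csum_ext. intros k _. apply quad_term_shift.
Qed.

Hypothesis coprime_aq : Z.gcd a (Z.of_nat q) = 1%Z.
Hypothesis parity_bq : gauss_parity b (Z.of_nat q).

Definition half_period_ind (k : nat) : R :=
  if Z.eqb ((2 * Z.of_nat k) mod Z.of_nat q) 0 then 1 else 0.

Lemma quad_term_autocorrelation m k : (k < q)%nat ->
  csum (fun l => Cmult (quad_term m (l + k)) (Cconj (quad_term m l))) q
  = RtoC (INR q * half_period_ind k).
Proof.
  intros Hk. unfold half_period_ind. set (h := Z.of_nat k).
  rewrite (csum_ext _ (fun l => e2pi (diff_slope h * INR l + diff_offset m h)))
    by (intros; apply quad_term_mul_conj; unfold h; lia).
  destruct (Z.eqb_spec ((2 * h) mod Z.of_nat q) 0) as [E | E].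
  - apply Z.mod_divide in E; [|lia].
    destruct (half_period_integral a b (Z.of_nat q) h) as [c [w [Ec Ew]]];
      try assumption; try (unfold h; lia).
    assert (Hslope : diff_slope h = IZR (a * c)).
    { unfold diff_slope. rewrite mult_IZR.
      replace (2 * IZR a * IZR h) with (IZR a * IZR (2 * h)) by (rewrite mult_IZR; ring).
      rewrite Ec, mult_IZR. field. exact IZR_q_neq0. }
    assert (Hquad : (IZR a * IZR h ^ 2 + IZR b * IZR h) / IZR (Z.of_nat q) = IZR w).
    { replace (IZR a * IZR h ^ 2 + IZR b * IZR h) with (IZR (a * h * h + b * h))
        by (rewrite plus_IZR, !mult_IZR; ring).
      rewrite Ew, mult_IZR. field. exact IZR_q_neq0. }
    rewrite (csum_ext _ (fun _ => RtoC 1)), csum_const, Rmult_1_r, Cmult_1_r; [reflexivity|].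
    intros l _. unfold diff_offset. rewrite Hslope, Hquad, INR_IZR_INZ, <- !mult_IZR, <- !plus_IZR.
    apply e2pi_IZR.
  - assert (Hslope : diff_slope h = IZR (a * (2 * h)) / IZR (Z.of_nat q))
      by (unfold diff_slope; rewrite !mult_IZR; field; exact IZR_q_neq0).
    rewrite csum_geom_eq0, Rmult_0_r; [reflexivity| |].
    + rewrite Hslope. apply e2pi_IZR_div_neq1; [lia|]. intros E2. apply E.
      apply Z.mod_divide in E2; [|lia]. apply Z.mod_divide; [lia|].
      apply (Z.gauss _ a); [assumption | now rewrite Z.gcd_comm].
    + exists (a * (2 * h))%Z. rewrite Hslope, INR_IZR_INZ. field. exact IZR_q_neq0.
Qed.

Lemma Cmod_gauss_sum_sq m : Cmod (csum (quad_term m) q) ^ 2 = INR q * rsum half_period_ind q.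
Proof.
  set (G := csum (quad_term m) q).
  assert (E : RtoC (Cmod G ^ 2) = RtoC (INR q * rsum half_period_ind q)).
  { rewrite Cmod2_conj. unfold G at 2. rewrite csum_conj, csum_mult_l.
    rewrite (csum_ext _ (fun l => csum (fun k =>
               Cmult (quad_term m (l + k)) (Cconj (quad_term m l))) q)).
    2: { intros l _. unfold G. rewrite <- (csum_periodic_shift _ q l) by apply quad_term_periodic.
         apply csum_mult_r. }
    rewrite csum_swap, (csum_ext _ (fun k => RtoC (INR q * half_period_ind k)))
      by (intros; apply quad_term_autocorrelation; assumption).
    now rewrite csum_RtoC, rsum_mult_l. }
  apply (f_equal fst) in E. exact E.
Qed.

Lemma rsum_half_period_ind_bounds : 1 <= rsum half_period_ind q <= 2.
Proof.
  split.
  - replace q with (1 + (q - 1))%nat by lia. rewrite rsum_split. simpl.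
    assert (half_period_ind 0 = 1) by (unfold half_period_ind; now rewrite Zmod_0_l).
    assert (0 <= rsum (fun k => half_period_ind (S k)) (q - 1))
      by (apply rsum_nonneg; intros; unfold half_period_ind; destruct (Z.eqb _ _); lra).
    lra.
  - eapply Rle_trans.
    { apply (rsum_le _ (fun k => (if Nat.eqb k 0 then 1 else 0)
                                 + (if Nat.eqb k (q / 2) then 1 else 0))).
      intros k Hk. unfold half_period_ind.
      destruct (Z.eqb_spec ((2 * Z.of_nat k) mod Z.of_nat q) 0) as [E|E];
        destruct (Nat.eqb_spec k 0) as [|Hk0], (Nat.eqb_spec k (q / 2)) as [|Hkq]; try lra.
      exfalso. apply Z.mod_divide in E; [|lia]. destruct E as [c Hc].
      assert (c = 1)%Z by nia. subst c.
      apply Hkq. rewrite <- (Nat.div_mul k 2) by lia. f_equal. lia. }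
    rewrite rsum_plus, !rsum_delta. destruct (Nat.ltb 0 q), (Nat.ltb (q / 2) q); lra.
Qed.

Lemma gauss_sum_sq_bounds m :
  INR q <= Cmod (csum (quad_term m) q) ^ 2 <= 2 * INR q.
Proof.
  rewrite Cmod_gauss_sum_sq. pose proof rsum_half_period_ind_bounds.
  assert (0 <= INR q) by apply pos_INR. nra.
Qed.

Let ln_q_nonneg : 0 <= ln (INR q).
Proof. rewrite <- ln_1. apply ln_le; [lra | apply (le_INR 1); lia]. Qed.

Lemma double_ratio_reduced : exists (d : nat) (c : Z),
  (1 <= d)%nat /\ (d <= q <= 2 * d)%nat /\ Z.gcd (Z.of_nat d) c = 1%Z /\
  forall h, diff_slope h = IZR (c * h) / IZR (Z.of_nat d).
Proof.
  pose proof (rel_prime_sym _ _ (proj1 (Zgcd_1_rel_prime _ _) coprime_aq)) as Hrel.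
  unfold diff_slope. destruct (Nat.Even_or_Odd q) as [[d Hd] | [d Hd]].
  - exists d, a. repeat split; try lia.
    + apply Zgcd_1_rel_prime, (rel_prime_div (Z.of_nat q)); [assumption|]. exists 2%Z. lia.
    + intros h. rewrite Hd, Nat2Z.inj_mul, !mult_IZR. field. apply not_0_IZR. lia.
  - exists q, (2 * a)%Z. repeat split; try lia.
    + apply Zgcd_1_rel_prime, rel_prime_mult; [|assumption].
      apply bezout_rel_prime, (Bezout_intro _ _ _ 1 (- Z.of_nat d)). lia.
    + intros h. rewrite !mult_IZR. reflexivity.
Qed.

Lemma Cmod_diagonal_le m d c L j : (1 <= d)%nat -> (L <= q)%nat ->
  (forall h, diff_slope h = IZR (c * h) / IZR (Z.of_nat d)) ->
  Cmod (csum (fun l => if andb (Nat.leb (L - j) l) (Nat.ltb l (2 * L - j))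
                       then Cmult (quad_term m (l + j - L)) (Cconj (quad_term m l)) else RtoC 0) L)
  <= geom_weight q d (resid c d (Z.of_nat j - Z.of_nat L)).
Proof.
  intros Hd HL Hslope. set (h := (Z.of_nat j - Z.of_nat L)%Z).
  rewrite (csum_ext _ (fun l => if andb (Nat.leb (L - j) l) (Nat.ltb l (2 * L - j))
                                then e2pi (diff_slope h * INR l + diff_offset m h) else RtoC 0)).
  2: { intros l _. destruct (Nat.leb_spec (L - j) l), (Nat.ltb_spec l (2 * L - j)); simpl;
       try reflexivity. apply quad_term_mul_conj. unfold h. lia. }
  unfold geom_weight, resid.
  destruct (Nat.eqb_spec (Z.to_nat ((c * h) mod Z.of_nat d)) 0) as [E | E].
  - eapply Rle_trans; [apply Cmod_csum_le|].
    eapply Rle_trans; [apply (rsum_le _ (fun _ => 1))|].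
    + intros l _. destruct (andb _ _); [rewrite Cmod_e2pi | rewrite Cmod_0]; lra.
    + rewrite rsum_const, Rmult_1_r. apply le_INR. assumption.
  - rewrite csum_indicator_interval.
    rewrite (csum_ext _ (fun i => e2pi (IZR (c * h) / IZR (Z.of_nat d) * INR i
                                        + (diff_slope h * INR (L - j) + diff_offset m h)))).
    2: { intros i _. rewrite <- Hslope, plus_INR. f_equal. ring. }
    assert (Hmod : ((c * h) mod Z.of_nat d <> 0)%Z)
      by (intros Z0; apply E; rewrite Z0; reflexivity).
    eapply Rle_trans; [apply Cmod_csum_geom_frac_le; [lia | exact Hmod]|].
    pose proof (Z.mod_pos_bound (c * h) (Z.of_nat d) ltac:(lia)).
    rewrite !INR_IZR_INZ, Z2Nat.id by lia. lra.
Qed.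

Lemma tail_sq_le m L : (L <= q)%nat ->
  Cmod (csum (quad_term m) L) ^ 2 <= 4 * (INR q + 2 * INR q * (1 + ln (INR q))).
Proof.
  intros HL. destruct double_ratio_reduced as [d [c [Hd [[Hdq Hqd] [Hg Hslope]]]]].
  rewrite Cmod_sq_mul_conj, csum_mul_conj_diagonals.
  eapply Rle_trans; [apply Cmod_csum_le|].
  eapply Rle_trans.
  { apply (rsum_le _ (fun j => geom_weight q d (resid c d (Z.of_nat j - Z.of_nat L)))).
    intros j _. apply Cmod_diagonal_le; assumption. }
  eapply Rle_trans; [apply rsum_geom_weight_diagonals; assumption || lia|].
  pose proof (rsum_geom_weight_le q d Hd Hdq).
  assert (INR d <= INR q) by (apply le_INR; assumption).
  assert (0 <= INR d) by apply pos_INR. nra.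
Qed.

Lemma tail_error_le m m' L : (L < q)%nat ->
  Cmod (csum (quad_term m') L) + Cmod (csum (quad_term m) q) * (INR L / INR q)
  <= 8 * sqrt (INR q * ln (INR q)).
Proof.
  intros HL. pose proof (sqrt_pos (INR q * ln (INR q))).
  destruct L as [|L]; [simpl; rewrite Cmod_0; unfold Rdiv; rewrite Rmult_0_l, Rmult_0_r; lra|].
  (* For [q >= 2], [ln q > 1/2], so [|T|^2 <= 4 q (3 + 2 ln q) <= 36 q ln q]
     and [|G|^2 <= 2 q <= 4 q ln q]. *)
  assert (Hq2 : 2 <= INR q) by (apply (le_INR 2); lia).
  assert (Hln : / 2 < ln (INR q))
    by (pose proof ln_lt_2; pose proof (ln_le 2 (INR q) ltac:(lra) Hq2); lra).
  assert (HT : Cmod (csum (quad_term m') (S L)) <= 6 * sqrt (INR q * ln (INR q))).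
  { apply le_mult_sqrt; [lra | nra |]. pose proof (tail_sq_le m' (S L) ltac:(lia)). nra. }
  assert (HG : Cmod (csum (quad_term m) q) <= 2 * sqrt (INR q * ln (INR q))).
  { apply le_mult_sqrt; [lra | nra |]. pose proof (gauss_sum_sq_bounds m). nra. }
  assert (INR (S L) / INR q <= 1)
    by (rewrite Rle_div_l, Rmult_1_l by lra; apply le_INR; lia).
  assert (0 <= INR (S L) / INR q) by (apply Rdiv_le_0_compat; [apply pos_INR | lra]).
  pose proof (Cmod_ge_0 (csum (quad_term m) q)). nra.
Qed.

Lemma Cmod_csum_quad_term_approx m n : exists C : R, 1 <= C <= sqrt 2 /\
  Rabs (Cmod (csum (quad_term m) n) - C * INR n / sqrt (INR q))
  <= 8 * sqrt (INR q * ln (INR q)).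
Proof.
  set (G := csum (quad_term m) q). pose proof (gauss_sum_sq_bounds m) as HG. fold G in HG.
  assert (Hq : 0 < INR q) by (apply lt_0_INR; lia).
  exists (Cmod G / sqrt (INR q)). split; [apply div_sqrt_bounds; [lra | apply Cmod_ge_0 | lra]|].
  rewrite (Nat.div_mod_eq n q), Nat.mul_comm, csum_quad_term_div_mod. fold G.
  set (N := (n / q)%nat). set (L := (n mod q)%nat).
  assert (HL : (L < q)%nat) by (apply Nat.mod_upper_bound; lia).
  set (T := csum (quad_term (m + Z.of_nat (N * q))) L).
  assert (EC : Cmod G / sqrt (INR q) * INR (N * q + L) / sqrt (INR q)
               = INR N * Cmod G + Cmod G * (INR L / INR q)).
  { rewrite plus_INR, mult_INR. rewrite <- (sqrt_sqrt (INR q)) at 2 4 by lra.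
    field. apply Rgt_not_eq, sqrt_lt_R0. lra. }
  rewrite EC.
  assert (HNG : Cmod (Cmult (RtoC (INR N)) G) = INR N * Cmod G)
    by (rewrite Cmod_mult, Cmod_R, Rabs_pos_eq by apply pos_INR; reflexivity).
  pose proof (Rabs_Cmod_add_sub (Cmult (RtoC (INR N)) G) T) as Htri. rewrite HNG in Htri.
  pose proof (tail_error_le m (m + Z.of_nat (N * q)) L HL) as Herr. fold G T in Herr.
  assert (0 <= Cmod G * (INR L / INR q))
    by (apply Rmult_le_pos; [apply Cmod_ge_0 | apply Rdiv_le_0_compat; [apply pos_INR | lra]]).
  apply Rabs_le. apply Rabs_le_between' in Htri. lra.
Qed.

End QuadraticPhase.

Theorem lemma2p2 :
  exists K : R, 0 <= K /\
  forall (m : Z) (n : nat) (a b q : Z),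
    (1 <= q)%Z ->
    Z.gcd a q = 1%Z ->
    (Z.odd q = true
     \/ (Z.modulo q 4 = 0%Z /\ Z.even b = true)
     \/ (Z.modulo q 4 = 2%Z /\ Z.odd b = true)) ->
    exists C : R, 1 / 2 <= C <= sqrt 2 /\
      Rabs (Cmod (expsum (quadf a b q) m n) - C * INR n / sqrt (IZR q))
        <= K * sqrt (IZR q * ln (IZR q)).
Proof.
  exists 8. split; [lra|]. intros m n a b q Hq Hg Hpar.
  destruct (Z_of_nat_complete q ltac:(lia)) as [q' ->].
  rewrite <- INR_IZR_INZ, expsum_csum.
  destruct (Cmod_csum_quad_term_approx a b q' ltac:(lia) Hg Hpar m n) as [C [HC Happrox]].
  exists C. split; [lra | exact Happrox].
Qed.
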